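(* Let $(X,\rho)$ be a metric continuum that is hereditarily indecomposable, and suppose $\{(A_0,B_0),(A_1,B_1)\}$ is an essential family of pairs of disjoint closed subsets of $X$ such that $\rho(x,y)>1$ whenever $x\in A_i$ and $y\in B_i$ ($i=0,1$). Let $\mathcal N$ be a finite collection of pairwise disjoint closed subsets of $X$, each of diameter at most $\tfrac12$. Then there is a continuum in $X$ of diameter at least $1$ that is disjoint from every element of $\mathcal N$.
   Context: A continuum is a compact connected metrizable space; it is hereditarily indecomposable if whenever two subcontinua meet, one contains the other. For disjoint closed $A,B\subseteq X$, a closed set $L$ is a partition between $A$ and $B$ if $X\setminus L=U\cup V$ with $U,V$ disjoint open, $A\subseteq U$, $B\subseteq V$. A family $\{(A_i,B_i)\}$ of pairs of disjoint closed sets is essential if for any choice of partitions $L_i$ between $A_i$ and $B_i$ one has $\bigcap_i L_i\neq\emptyset$. *)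

From HB Require Import structures.
From mathcomp Require Import all_boot all_order all_algebra.
From mathcomp Require Import all_classical all_reals all_analysis.
Set Implicit Arguments. Unset Strict Implicit. Unset Printing Implicit Defensive.
Import Order.TTheory GRing.Theory Num.Theory.
Local Open Scope classical_set_scope.
Local Open Scope ring_scope.

Definition continuum_in {R : realType} {X : metricType R} (C : set X) : Prop :=
  [/\ C !=set0, compact C & connected C].

Definition diam {R : realType} {X : metricType R} (C : set X) : \bar R :=
  ereal_sup [set (mdist x y)%:E | x in C & y in C].

Definition hered_indecomposable {R : realType} {X : metricType R} : Prop :=
  forall C D : set X, continuum_in C -> continuum_in D ->
    C `&` D !=set0 -> C `<=` D \/ D `<=` C.

Definition partition_between {R : realType} {X : metricType R}
    (A B L : set X) : Prop :=
  closed L /\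
  exists U V : set X, [/\ open U, open V, U `&` V = set0 &
    [/\ ~` L = U `|` V, A `<=` U & B `<=` V]].

Definition essential_family {R : realType} {X : metricType R} {I : Type}
    (A B : I -> set X) : Prop :=
  forall L : I -> set X, (forall i, partition_between (A i) (B i) (L i)) ->
    (\bigcap_i L i) !=set0.

From HB Require Import structures.
From mathcomp Require Import all_boot all_order all_algebra.
From mathcomp Require Import all_classical all_reals all_analysis.
Import Order.TTheory GRing.Theory Num.Theory.
Local Open Scope classical_set_scope.
Local Open Scope ring_scope.

(* Put the members of N meeting A_0 into A_0 and the others into B_0: the
   enlarged sets stay disjoint, because a set of diameter at most 1/2 cannot
   meet both A_0 and B_0, so some partition L_0 between A_0 and B_0 misses
   every member of N.  Some connected subset of L_0 meets both A_1 and B_1: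
   otherwise, quasi-components being connected in a compact Hausdorff space,
   a relatively clopen part of L_0 contains all points of A_1 in L_0 and
   misses B_1, which yields a partition L_1 between A_1 and B_1 disjoint from
   L_0, against essentiality.  The closure of that connected set is then a
   continuum of diameter > 1 inside L_0. *)

Section compact_hausdorff.
Context {T : topologicalType}.
Hypotheses (hT : hausdorff_space T) (cT : compact [set: T]).

Lemma closed_disjoint_separation [A B : set T] :
  closed A -> closed B -> A `&` B = set0 ->
  exists U V, [/\ open U, open V, A `<=` U, B `<=` V & U `&` V = set0].
Proof.
move=> cA cB AB0.
have nbhsA_B : set_nbhs A (~` B).
  apply/set_nbhsP; exists (~` B); split => //; first exact: closed_openC.
  by apply/disjoints_subset.
have [W /set_nbhsP [U [oU AU UW]] clWB] := compact_normal hT cT cA nbhsA_B.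
exists U, (~` closure W); split => //.
- exact/closed_openC/closed_closure.
- by move=> x Bx /clWB; apply.
- by apply/disjoints_subset; rewrite setCK => x /UW /subset_closure.
Qed.

Lemma compact_bigcap_disjoint (K : set (set T)) (Y : set T) :
  closed Y -> (forall C, K C -> closed C) -> K !=set0 ->
  (forall C D, K C -> K D -> K (C `&` D)) ->
  (\bigcap_(C in K) C) `&` Y = set0 -> exists2 C, K C & C `&` Y = set0.
Proof.
move=> cY cK [C0 KC0] KI; apply: contraPP => /forall2NP KY.
have {}KY C : K C -> C `&` Y !=set0.
  by move=> KC; apply/set0P/eqP; case: (KY C) => // /(_ KC).
pose F := filter_from K (fun C => C `&` Y).
have PF : ProperFilter F.
  apply: filter_from_proper => //.
  apply: filter_from_filter; first by exists C0.
  by move=> C D KC KD; exists (C `&` D); [exact: KI | move=> x [[? ?] ?]].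
have [p [_ Fp]] := cT F PF filterT.
have {}Fp C : K C -> (C `&` Y) p.
  move=> KC; have /closure_id -> : closed (C `&` Y).
    by apply: closedI => //; exact: cK.
  by move: Fp; rewrite clusterE; apply; exists C.
move=> KY0; suff : ((\bigcap_(C in K) C) `&` Y) p by rewrite KY0.
by split; [move=> C /Fp [] | case: (Fp _ KC0)].
Qed.

Definition rel_clopen (L C : set T) :=
  [/\ C `<=` L, closed C & closed (L `\` C)].

Lemma rel_clopenI (L C D : set T) :
  rel_clopen L C -> rel_clopen L D -> rel_clopen L (C `&` D).
Proof.
move=> [CL cC cLC] [_ cD cLD]; split; [by move=> x [/CL] | exact: closedI |].
by rewrite setDIr; exact: closedU.
Qed.

Lemma rel_clopenU (L C D : set T) :
  rel_clopen L C -> rel_clopen L D -> rel_clopen L (C `|` D).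
Proof.
move=> [CL cC cLC] [DL cD cLD].
split; [by move=> x [/CL|/DL] | exact: closedU |].
by rewrite setDUr; exact: closedI.
Qed.

Lemma rel_clopen_id (L : set T) : closed L -> rel_clopen L L.
Proof. by move=> cL; split => //; rewrite setDv; exact: closed0. Qed.

Lemma rel_clopen0 (L : set T) : closed L -> rel_clopen L set0.
Proof. by move=> cL; split => //; [exact: closed0 | rewrite setD0]. Qed.

Lemma rel_clopenI_open (L C U V : set T) :
  rel_clopen L C -> open U -> open V -> U `&` V = set0 -> C `<=` U `|` V ->
  rel_clopen L (C `&` U).
Proof.
move=> [CL cC cLC] oU oV UV0 CUV.
have CU : C `&` U = C `&` ~` V.
  apply/seteqP; split => x [Cx Ux]; split => //.
    by move=> Vx; have : (U `&` V) x by []; rewrite UV0.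
  by case: (CUV _ Cx).
have LCU : L `\` (C `&` U) = (L `\` C) `|` (C `&` ~` U).
  apply/seteqP; split => x.
    move=> [Lx nCUx]; have [Cx|nCx] := pselect (C x); last by left.
    by right; split => // Ux; apply: nCUx.
  case => [[Lx nCx] | [Cx nUx]]; first by split => // -[].
  by split; [exact: CL | case].
split; [by move=> x [/CL] | rewrite CU | rewrite LCU].
- by apply: closedI => //; exact: open_closedC.
- by apply: closedU => //; apply: closedI => //; exact: open_closedC.
Qed.

Definition quasi_component (L : set T) (x : T) :=
  \bigcap_(C in [set C | rel_clopen L C /\ C x]) C.

Lemma quasi_component_refl (L : set T) (x : T) : quasi_component L x x.
Proof. by move=> C []. Qed.

Lemma quasi_component_sub (L : set T) (x : T) :
  closed L -> L x -> quasi_component L x `<=` L.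
Proof. by move=> cL Lx y; apply; split => //; exact: rel_clopen_id. Qed.

Lemma closed_quasi_component (L : set T) (x : T) :
  closed (quasi_component L x).
Proof. by apply: closed_bigI => C [[]]. Qed.

Lemma quasi_component_disjoint (L F : set T) (x : T) :
  closed L -> L x -> closed F -> quasi_component L x `&` F = set0 ->
  exists C, [/\ rel_clopen L C, C x & C `&` F = set0].
Proof.
move=> cL Lx cF QF.
have [C [rC Cx] CF] : exists2 C, rel_clopen L C /\ C x & C `&` F = set0.
  apply: compact_bigcap_disjoint => //.
  - by move=> C [[]].
  - by exists L; split => //; exact: rel_clopen_id.
  - by move=> C D [rC Cx] [rD Dx]; split; [exact: rel_clopenI |].
by exists C.
Qed.

Lemma quasi_component_sub_open (L U V : set T) (x : T) :
  closed L -> L x -> open U -> open V -> U `&` V = set0 ->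
  quasi_component L x `<=` U `|` V -> U x -> quasi_component L x `<=` U.
Proof.
move=> cL Lx oU oV UV0 QUV Ux.
have [C [rC Cx CUV]] :
    exists C, [/\ rel_clopen L C, C x & C `&` ~` (U `|` V) = set0].
  apply: quasi_component_disjoint => //; first exact/open_closedC/openU.
  by apply/disjoints_subset; rewrite setCK.
have /rel_clopenI_open rCU : C `<=` U `|` V.
  by move/disjoints_subset: CUV; rewrite setCK.
by move=> y /(_ (C `&` U)) [] //; split; [exact: rCU |].
Qed.

Lemma closed_split_connected (Q : set T) : closed Q ->
  (forall P1 P2 : set T, closed P1 -> closed P2 -> P1 `&` P2 = set0 ->
    Q = P1 `|` P2 -> P1 = set0 \/ P2 = set0) ->
  connected Q.
Proof.
move=> cQ split_triv B [b Bb] [W oW BQW] [D cD BQD].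
have [P1_0|P2_0] : Q `&` D = set0 \/ Q `\` W = set0.
  apply: split_triv.
  - exact: closedI.
  - by rewrite setDE; apply: closedI => //; exact: open_closedC.
  - by rewrite -BQD BQW; apply/disjoints_subset => x [_ Wx] [].
  - apply/seteqP; split => [x Qx|x [[]|[]] //].
    by have [Wx|nWx] := pselect (W x); [left; rewrite -BQD BQW | right].
- by move: Bb; rewrite BQD P1_0.
- apply/seteqP; split => [x|x Qx]; first by rewrite BQD => -[].
  rewrite BQW; split => //; apply: contrapT => nWx.
  by have : (Q `\` W) x by []; rewrite P2_0.
Qed.

Lemma quasi_component_connected (L : set T) (x : T) :
  closed L -> L x -> connected (quasi_component L x).
Proof.
move=> cL Lx.
apply: closed_split_connected; first exact: closed_quasi_component.
move=> P1 P2 cP1 cP2 P12 QP.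
wlog P1x : P1 P2 cP1 cP2 P12 QP / P1 x.
  move=> wlog_P1x; have := quasi_component_refl L x; rewrite QP => -[P1x|P2x].
    exact: wlog_P1x.
  by rewrite or_comm; apply: wlog_P1x => //; rewrite (setIC, setUC).
have [U [V [oU oV P1U P2V UV0]]] := closed_disjoint_separation cP1 cP2 P12.
have QU : quasi_component L x `<=` U.
  apply: quasi_component_sub_open oV _ _ _ => //; last exact: P1U.
  by rewrite QP => y [/P1U|/P2V]; [left | right].
right; apply/seteqP; split => // y P2y; have : (U `&` V) y.
  by split; [apply: QU; rewrite QP; right | exact: P2V].
by rewrite UV0.
Qed.

Lemma rel_clopen_cover (L E F : set T) : closed L -> closed E ->
  (forall x, E x -> L x ->
    exists C, [/\ rel_clopen L C, C x & C `&` F = set0]) ->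
  exists P, [/\ rel_clopen L P, E `&` L `<=` P & P `&` F = set0].
Proof.
move=> cL cE cover.
pose K := [set L `\` P | P in [set P | rel_clopen L P /\ P `&` F = set0]].
have [_ [P [rP PF] <-] LPEL] : exists2 D, K D & D `&` (E `&` L) = set0.
  apply: compact_bigcap_disjoint.
  - exact: closedI.
  - by move=> _ [P [[_ _ ?] _] <-].
  - exists L, set0; last by rewrite setD0.
    by split; [exact: rel_clopen0 | exact: set0I].
  - move=> _ _ [P1 [r1 F1] <-] [P2 [r2 F2] <-].
    exists (P1 `|` P2); last by rewrite setDUr.
    by split; [exact: rel_clopenU | rewrite setIUl F1 F2 setU0].
  - apply/seteqP; split => // z [Kz [Ez Lz]].
    have [C [rC Cz CF]] := cover z Ez Lz.
    by have [] := Kz (L `\` C); first by exists C.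
exists P; split => // z [Ez Lz]; apply: contrapT => nPz.
by have : ((L `\` P) `&` (E `&` L)) z by []; rewrite LPEL.
Qed.

Lemma rel_clopen_cut (L E F : set T) : closed L -> closed E -> closed F ->
  (forall C, connected C -> C `<=` L -> C `&` E !=set0 -> C `&` F = set0) ->
  exists P, [/\ rel_clopen L P, E `&` L `<=` P & P `&` F = set0].
Proof.
move=> cL cE cF cut; apply: rel_clopen_cover => // x Ex Lx.
apply: quasi_component_disjoint => //; apply: cut.
- exact: quasi_component_connected.
- exact: quasi_component_sub.
- by exists x; split => //; exact: quasi_component_refl.
Qed.

End compact_hausdorff.

Section partitions.
Context {R : realType} {X : metricType R}.
Implicit Types (A B L S : set X).

Lemma partition_betweenS A B A' B' L :
  A `<=` A' -> B `<=` B' ->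
  partition_between A' B' L -> partition_between A B L.
Proof.
move=> AA' BB' [cL [U [V [oU oV UV0 [LUV A'U B'V]]]]]; split => //.
exists U, V; split => //; split => //.
- exact: subset_trans A'U.
- exact: subset_trans B'V.
Qed.

Lemma partition_between_disjoint [A B L] :
  partition_between A B L -> L `&` (A `|` B) = set0.
Proof.
move=> [_ [U [V [_ _ _ [LUV AU BV]]]]].
rewrite setIC; apply/disjoints_subset; rewrite LUV.
by move=> x [/AU|/BV]; [left | right].
Qed.

Lemma mdist_le_diam [S : set X] [x y : X] :
  S x -> S y -> ((mdist x y)%:E <= diam S)%E.
Proof. by move=> Sx Sy; apply: ereal_sup_ubound; exists x => //; exists y. Qed.

Lemma small_set_far_disjoint [r : R] [A B S : set X] :
  (forall x y, A x -> B y -> r < mdist x y) -> (diam S <= r%:E)%E ->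
  S `&` A !=set0 -> S `&` B = set0.
Proof.
move=> far dS [a [Sa Aa]]; apply/seteqP; split => // b [Sb Bb].
have := far a b Aa Bb; rewrite ltNge.
by have := le_trans (mdist_le_diam Sa Sb) dS; rewrite lee_fin => ->.
Qed.

Lemma essential2_partitions_meet [A B : 'I_2 -> set X] [L0 L1 : set X] :
  essential_family A B ->
  partition_between (A ord0) (B ord0) L0 ->
  partition_between (A ord_max) (B ord_max) L1 -> L0 `&` L1 !=set0.
Proof.
move=> ess pL0 pL1.
pose L (i : 'I_2) := if i == ord0 then L0 else L1.
have pL i : partition_between (A i) (B i) (L i).
  rewrite /L; case: ifPn => [/eqP -> // | i_neq0].
  suff -> : i = ord_max by [].
  by apply/val_inj; case: i i_neq0 => -[|[|]].
have [x Lx] := ess L pL.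
by exists x; split; [exact: (Lx ord0) | exact: (Lx ord_max)].
Qed.

Hypothesis cX : compact [set: X].

Lemma partition_between_exists [A B] :
  closed A -> closed B -> A `&` B = set0 -> exists L, partition_between A B L.
Proof.
move=> cA cB AB0.
have [U [V [oU oV AU BV UV0]]] :=
  closed_disjoint_separation (@metric_hausdorff _ X) cX cA cB AB0.
exists (~` (U `|` V)); split; first exact/open_closedC/openU.
by exists U, V; rewrite setCK.
Qed.

Lemma partition_between_avoiding A B (N : set (set X)) :
  closed A -> closed B -> A `&` B = set0 ->
  finite_set N -> (forall S, N S -> closed S) ->
  (forall S T, N S -> N T -> S <> T -> S `&` T = set0) ->
  (forall S, N S -> S `&` A !=set0 -> S `&` B = set0) ->
  exists L, partition_between A B L /\ forall S, N S -> L `&` S = set0.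
Proof.
move=> cA cB AB0 finN cN disjN NAB.
pose NA := [set S | N S /\ S `&` A !=set0].
pose NB := [set S | N S /\ ~ (S `&` A !=set0)].
pose A' := A `|` \bigcup_(S in NA) S; pose B' := B `|` \bigcup_(S in NB) S.
have cA' : closed A'.
  apply: closedU => //; apply: closed_bigcup => [|S [/cN]] //.
  by apply: sub_finite_set finN => S [].
have cB' : closed B'.
  apply: closedU => //; apply: closed_bigcup => [|S [/cN]] //.
  by apply: sub_finite_set finN => S [].
have A'B'0 : A' `&` B' = set0.
  apply/seteqP; split => // x [[Ax|[S [NS SA] Sx]] [Bx|[S' [NS' S'A] S'x]]].
  - by rewrite -AB0.
  - by apply: S'A; exists x.
  - by rewrite -(NAB S NS SA).
  - have SS' : S <> S' by move=> SS'; apply: S'A; rewrite -SS'.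
    by rewrite -(disjN S S').
have [L pL] := partition_between_exists cA' cB' A'B'0.
exists L; split; first by apply: partition_betweenS pL => x; left.
move=> S NS.
apply: (subsetI_eq0 (@subset_refl _ L) _ (partition_between_disjoint pL)).
have [SA|SnA] := pselect (S `&` A !=set0).
  by move=> x Sx; left; right; exists S.
by move=> x Sx; right; right; exists S.
Qed.

Lemma rel_clopen_partition_between [A B L P : set X] :
  closed A -> closed B -> A `&` B = set0 ->
  rel_clopen L P -> A `&` L `<=` P -> P `&` B = set0 ->
  exists L', partition_between A B L' /\ L' `&` L = set0.
Proof.
move=> cA cB AB0 [_ cP cLP] ALP PB0.
have AB'0 : (A `|` P) `&` (B `|` (L `\` P)) = set0.
  apply/seteqP; split => // x [[Ax|Px] [Bx|[Lx nPx]]] //.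
  - by rewrite -AB0.
  - by apply: nPx; apply: ALP.
  - by rewrite -PB0.
have [L' pL'] :=
  partition_between_exists (closedU cA cP) (closedU cB cLP) AB'0.
exists L'; split; first by apply: partition_betweenS pL' => x; left.
apply: (subsetI_eq0 (@subset_refl _ L') _ (partition_between_disjoint pL')).
by move=> x Lx; have [Px|nPx] := pselect (P x); [left; right | right; right].
Qed.

Lemma essential2_connected_meet [A B : 'I_2 -> set X] [L0 : set X] :
  essential_family A B ->
  closed (A ord_max) -> closed (B ord_max) -> A ord_max `&` B ord_max = set0 ->
  partition_between (A ord0) (B ord0) L0 ->
  exists C, [/\ connected C, C `<=` L0,
    C `&` A ord_max !=set0 & C `&` B ord_max !=set0].
Proof.
move=> ess cA1 cB1 AB1 pL0; apply: contrapT => /forallNP noC.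
have [P [rP A1P PB1]] : exists P, [/\ rel_clopen L0 P,
    A ord_max `&` L0 `<=` P & P `&` B ord_max = set0].
  apply: rel_clopen_cut => //; [exact: metric_hausdorff | exact: pL0.1 |].
  move=> C cC CL0 CA; apply: contrapT => CB; apply: (noC C); split => //.
  exact/set0P/eqP.
have [L1 [pL1 L1L0]] := rel_clopen_partition_between cA1 cB1 AB1 rP A1P PB1.
have [x [L0x L1x]] := essential2_partitions_meet ess pL0 pL1.
by have : (L1 `&` L0) x by []; rewrite L1L0.
Qed.

End partitions.

Theorem lemma6p5 (R : realType) (X : metricType R)
  (A B : 'I_2 -> set X) (N : set (set X)) :
  compact [set: X] -> connected [set: X] -> [set: X] !=set0 ->
  @hered_indecomposable R X ->
  (forall i, closed (A i) /\ closed (B i) /\ A i `&` B i = set0) ->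
  essential_family A B ->
  (forall i x y, A i x -> B i y -> 1 < mdist x y) ->
  finite_set N ->
  (forall S, N S -> closed S /\ (diam S <= (2^-1)%:E)%E) ->
  (forall S T, N S -> N T -> S <> T -> S `&` T = set0) ->
  exists C : set X, [/\ continuum_in C, (1%:E <= diam C)%E &
    forall S, N S -> C `&` S = set0].
Proof.
move=> cX _ _ _ ABc ess far finN smallN disjN.
have [cA0 [cB0 AB0]] := ABc ord0; have [cA1 [cB1 AB1]] := ABc ord_max.
have [L0 [pL0 L0N]] : exists L0, partition_between (A ord0) (B ord0) L0 /\
    forall S, N S -> L0 `&` S = set0.
  apply: partition_between_avoiding => // [S /smallN [] // | S NS].
  apply: (small_set_far_disjoint (far ord0)).
  by apply: le_trans (smallN S NS).2 _; rewrite lee_fin invf_le1 // ler1n.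
have [C [cC CL0 [a [Ca Aa]] [b [Cb Bb]]]] :=
  essential2_connected_meet cX ess cA1 cB1 AB1 pL0.
exists (closure C); split.
- split; [by exists a; exact: subset_closure | | exact: connected_closure].
  exact: subclosed_compact (@closed_closure _ C) cX _.
- apply: le_trans (mdist_le_diam (subset_closure Ca) (subset_closure Cb)).
  by rewrite lee_fin ltW // (far ord_max).
- move=> S NS; apply: subsetI_eq0 (L0N S NS) => //.
  by rewrite [X in _ `<=` X](closure_id L0).1; [exact: closureS | exact: pL0.1].
Qed.
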